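(* For every integer $n\geq 7$ there exists a tree $T$ on $n$ vertices that is neutral, i.e., whose assortativity coefficient satisfies $r(T)=0$.
   Context: All graphs are finite, simple and connected. For a graph $G=(V,E)$ with $m=|E|\geq 1$ edges, let $d_u$ denote the degree of vertex $u$ and write sums over edges $e_{uv}\in E$ (each edge counted once). The assortativity coefficient of $G$ is $$r(G)=\frac{m^{-1}\sum_{e_{uv}\in E} d_{u}d_{v}-\Big[m^{-1}\sum_{e_{uv}\in E} \tfrac{1}{2}(d_{u}+d_{v})\Big]^{2}}{m^{-1}\sum_{e_{uv}\in E} \tfrac{1}{2}(d^{2}_{u}+d^{2}_{v})-\Big[m^{-1}\sum_{e_{uv}\in E} \tfrac{1}{2}(d_{u}+d_{v})\Big]^{2}},$$ defined whenever the denominator is nonzero. $G$ is called neutral if $r(G)$ is defined and $r(G)=0$. *)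

From mathcomp Require Import all_boot all_order all_algebra.
Set Implicit Arguments. Unset Strict Implicit. Unset Printing Implicit Defensive.
Import Order.TTheory GRing.Theory Num.Theory.
Local Open Scope ring_scope.

Definition simple_graph (n : nat) (e : rel 'I_n) : Prop :=
  irreflexive e /\ symmetric e.

Definition connected_graph (n : nat) (e : rel 'I_n) : Prop :=
  forall x y : 'I_n, connect e x y.

Definition acyclic_graph (n : nat) (e : rel 'I_n) : Prop :=
  ~ (exists s : seq 'I_n, [/\ (3 <= size s)%N, uniq s & cycle e s]).

Definition is_tree (n : nat) (e : rel 'I_n) : Prop :=
  [/\ simple_graph e, connected_graph e & acyclic_graph e].

Definition deg (n : nat) (e : rel 'I_n) (u : 'I_n) : nat := #|[set v | e u v]|.

Definition edge_sum (n : nat) (e : rel 'I_n) (F : 'I_n -> 'I_n -> rat) : rat :=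
  \sum_(u : 'I_n) \sum_(v : 'I_n | (u < v)%N && e u v) F u v.

Definition nedges (n : nat) (e : rel 'I_n) : nat :=
  #|[set p : 'I_n * 'I_n | (p.1 < p.2)%N && e p.1 p.2]|.

Definition assort_mean (n : nat) (e : rel 'I_n) : rat :=
  (nedges e)%:R^-1 * edge_sum e (fun u v => 2^-1 * ((deg e u)%:R + (deg e v)%:R)).

Definition assort_num (n : nat) (e : rel 'I_n) : rat :=
  (nedges e)%:R^-1 * edge_sum e (fun u v => (deg e u)%:R * (deg e v)%:R)
  - (assort_mean e) ^+ 2.

Definition assort_den (n : nat) (e : rel 'I_n) : rat :=
  (nedges e)%:R^-1 * edge_sum e (fun u v => 2^-1 * ((deg e u)%:R ^+ 2 + (deg e v)%:R ^+ 2))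
  - (assort_mean e) ^+ 2.

Definition assortativity (n : nat) (e : rel 'I_n) : rat :=
  assort_num e / assort_den e.

(* Neutral: m >= 1, r(G) is defined (denominator nonzero) and r(G) = 0. *)
Definition neutral (n : nat) (e : rel 'I_n) : Prop :=
  [/\ (1 <= nedges e)%N, assort_den e != 0 & assortativity e = 0].

From mathcomp Require Import all_boot all_order all_algebra.
From mathcomp Require Import zify ring.
Set Implicit Arguments. Unset Strict Implicit. Unset Printing Implicit Defensive.
Import Order.TTheory GRing.Theory Num.Theory.

(* The tree is the spider with centre 2 and legs 2-1-0, 2-3-4 and 2-5-6-...-n.  Its n edges
   have end degrees (1,2) three times, (2,3) three times and (2,2) n-6 times, so the mean end
   degree is 2 and the edge sum of d_u d_v is 4n = n * 2^2: the numerator of r vanishes, while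
   the denominator is 3/n. *)

Lemma uniq_cycle_nbrs (T : eqType) (e : rel T) (s : seq T) (x : T) :
  uniq s -> cycle e s -> 3 <= size s -> x \in s ->
  exists a b, [/\ a \in s, b \in s, a != b, e x a & e b x].
Proof.
move=> s_uniq s_cycle s_size xs; have [i s' s_rot] := rot_to xs.
have : uniq (x :: s') by rewrite -s_rot rot_uniq.
have : cycle e (x :: s') by rewrite -s_rot rot_cycle.
have : 2 <= size s' by move: s_size; rewrite -(size_rot i) s_rot.
have in_s y : y \in s' -> y \in s by move=> ys; rewrite -(mem_rot i) s_rot inE ys orbT.
case: s' s_rot in_s => [|a t] // _ in_s.
case/lastP: t in_s => [|t b] // in_s _.
rewrite /= rcons_path last_rcons /= => /and3P [xa _ bx] /and3P [_ + _].
rewrite mem_rcons inE negb_or => /andP [ab _].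
by exists a, b; split=> //; apply: in_s; rewrite ?mem_head // inE mem_rcons mem_head orbT.
Qed.

Lemma card_ord_mem_seq n (s : seq nat) : uniq s -> all (fun k => k < n) s ->
  #|[set v : 'I_n | (v : nat) \in s]| = size s.
Proof.
elim: s => [|k s IH] /=; first by move=> _ _; apply: eq_card0 => v; rewrite !inE.
case/andP=> k_notin s_uniq /andP [k_lt s_lt].
have -> : [set v : 'I_n | (v : nat) \in k :: s] =
    Ordinal k_lt |: [set v : 'I_n | (v : nat) \in s].
  by apply/setP => v; rewrite !inE -(inj_eq val_inj).
by rewrite cardsU1 IH // inE /= k_notin.
Qed.

Section ParentTree.

Variables (n : nat) (p : nat -> nat).
Hypothesis p_lt : forall k, 0 < k -> p k < k.

Definition parent_tree : rel 'I_n.+1 :=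
  fun u v => ((0 < v) && (u == p v :> nat)) || ((0 < u) && (v == p u :> nat)).

Lemma parent_tree_sym : symmetric parent_tree.
Proof. by move=> u v; rewrite /parent_tree orbC. Qed.

Lemma parent_tree_irr : irreflexive parent_tree.
Proof.
move=> u; rewrite /parent_tree orbb.
by case: (posnP u) => [-> // | /p_lt/gtn_eqF ->]; rewrite andbF.
Qed.

Lemma parent_tree_lt u v : parent_tree u v -> v < u -> v = p u :> nat.
Proof.
by case/orP=> /andP [v_gt0 /eqP uE] // vu; have := p_lt v_gt0; lia.
Qed.

Lemma parent_tree_connect_root (x r : 'I_n.+1) : r = 0 :> nat -> connect parent_tree x r.
Proof.
move=> r0; have [k] := ubnP (x : nat); elim: k x => // k IH x.
case: (posnP x) => [x0 _ | x_gt0 xk].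
  by have -> : x = r by apply: val_inj => /=; rewrite x0 r0.
have px_lt : p x < n.+1 by apply: ltn_trans (p_lt x_gt0) (ltn_ord x).
apply: (connect_trans (y := Ordinal px_lt)).
  by apply: connect1; rewrite /parent_tree x_gt0 eqxx orbT.
by apply: IH => /=; have := p_lt x_gt0; lia.
Qed.

Lemma parent_tree_connected : connected_graph parent_tree.
Proof.
move=> x y; apply: (connect_trans (parent_tree_connect_root x (erefl : ord0 = 0 :> nat))).
by rewrite (sym_connect_sym parent_tree_sym); apply: parent_tree_connect_root.
Qed.

Lemma parent_tree_acyclic : acyclic_graph parent_tree.
Proof.
case=> s [s_size s_uniq s_cycle].
have [x0 x0s] : exists x0, x0 \in s.
  by case: s s_size {s_uniq s_cycle} => // y s _; exists y; rewrite mem_head.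
(* Both cycle neighbours of the largest vertex lie below it, so both are its parent. *)
case: (arg_maxnP (fun y : 'I_n.+1 => y : nat) x0s) => x xs x_max.
have [a [b [a_s b_s ab xa bx]]] := uniq_cycle_nbrs s_uniq s_cycle s_size xs.
have below y : y \in s -> parent_tree x y -> y = p x :> nat.
  move=> ys xy; have y_le : y <= x := x_max y ys.
  have y_neq : y != x by apply: contraTneq xy => ->; rewrite parent_tree_irr.
  by apply: parent_tree_lt xy _; rewrite ltn_neqAle y_le (inj_eq val_inj) y_neq.
have aE := below a a_s xa.
have bE : b = p x :> nat by apply: below; rewrite // parent_tree_sym.
by move: ab; rewrite -(inj_eq val_inj) /= aE bE eqxx.
Qed.

Lemma parent_tree_is_tree : is_tree parent_tree.
Proof.
split; last exact: parent_tree_acyclic; last exact: parent_tree_connected.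
by split; [exact: parent_tree_irr | exact: parent_tree_sym].
Qed.

Lemma lt_parent_treeE (u v : 'I_n.+1) :
  0 < v -> (u < v) && parent_tree u v = (u == p v :> nat).
Proof.
move=> v_gt0; have := p_lt v_gt0; rewrite /parent_tree v_gt0.
by case: (posnP u) => [-> | /p_lt]; lia.
Qed.

Local Open Scope ring_scope.

Lemma edge_sum_parent_tree F :
  edge_sum parent_tree F = \sum_(1 <= k < n.+1) F (inord (p k)) (inord k).
Proof.
rewrite /edge_sum (exchange_big_dep xpredT) //= big_ord_recl.
rewrite big_pred0 => [|u]; last by rewrite ltn0.
rewrite add0r big_add1 succnK big_mkord; apply: eq_bigr => i _.
have v_gt0 : (0 < lift ord0 i)%N by rewrite lift0.
have p_lt_n : (p i.+1 < n.+1)%N by rewrite -lift0; apply: ltn_trans (p_lt v_gt0) _.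
rewrite (big_pred1 (inord (p i.+1))) => [|u].
  by congr F; apply: ord_inj; rewrite lift0 inordK // ltnS ltn_ord.
by rewrite lt_parent_treeE //= -(inj_eq (@ord_inj _)) inordK // lift0.
Qed.

Lemma nedges_parent_tree : nedges parent_tree = n.
Proof.
apply/eqP; rewrite -(eqr_nat rat).
have -> : (nedges parent_tree)%:R = edge_sum parent_tree (fun _ _ => 1) :> rat.
  rewrite /nedges -sum1_card natr_sum /edge_sum pair_big_dep /=.
  by apply: eq_bigl => q; rewrite inE.
by rewrite edge_sum_parent_tree sumr_const_nat subn1.
Qed.

End ParentTree.

Definition spider_parent (k : nat) : nat := if k == 5 then 2 else k.-1.

Definition spider (n : nat) : rel 'I_n.+1 := @parent_tree n spider_parent.
Arguments spider : clear implicits.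

Lemma spider_parent_lt k : 0 < k -> spider_parent k < k.
Proof. by rewrite /spider_parent; case: eqP => [->|_]; lia. Qed.

Lemma spider_is_tree n : is_tree (spider n).
Proof. exact: parent_tree_is_tree spider_parent_lt. Qed.

Section Spider.

Variable n : nat.
Hypothesis n_gt5 : 5 < n.

Definition spider_deg (k : nat) : nat :=
  if k == 2 then 3 else if k \in [:: 0; 4; n] then 1 else 2.

Lemma deg_spider k : k <= n -> deg (spider n) (inord k) = spider_deg k.
Proof.
move=> k_le; pose nbrs := if k == 0 then [:: 1] else if k == 2 then [:: 1; 3; 5]
  else if k == 4 then [:: 3] else if k == 5 then [:: 2; 6]
  else if k == n then [:: n.-1] else [:: k.-1; k.+1].
have -> : spider_deg k = size nbrs.
  by rewrite /spider_deg /nbrs !inE; do ![case: eqP => ?] => //=; lia.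
rewrite /deg -(@card_ord_mem_seq n.+1 nbrs).
- apply: eq_card => v; rewrite !inE /spider /parent_tree /spider_parent inordK //.
  have := ltn_ord v; rewrite /nbrs; do ![case: ifP => ?]; rewrite ?inE; lia.
- rewrite /nbrs; do ![case: ifP => ?]; rewrite /= ?inE; lia.
- rewrite /nbrs; do ![case: ifP => ?]; rewrite /= ?inE; lia.
Qed.

Local Open Scope ring_scope.

Lemma sum_nat_split_const (H : nat -> rat) c :
  (forall k, (5 < k < n)%N -> H k = c) ->
  \sum_(1 <= k < n.+1) H k = H 1%N + H 2%N + H 3%N + H 4%N + H 5%N + c *+ (n - 6) + H n.
Proof.
move=> H_mid; rewrite big_nat_recr /=; last lia.
rewrite (@big_cat_nat _ _ _ 6) //=.
rewrite (eq_big_nat _ _ H_mid) sumr_const_nat.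
by rewrite /index_iota /= !big_cons big_nil !addrA addr0.
Qed.

Lemma spider_edge_sum (f : nat -> nat -> rat) :
  edge_sum (spider n) (fun u v => f (deg (spider n) u) (deg (spider n) v)) =
  f 1%N 2%N + f 2%N 3%N + f 3%N 2%N + f 2%N 1%N + f 3%N 2%N + f 2%N 2%N *+ (n - 6)
  + f 2%N 1%N.
Proof.
have deg_edge k : (0 < k < n.+1)%N ->
    f (deg (spider n) (inord (spider_parent k))) (deg (spider n) (inord k)) =
    f (spider_deg (spider_parent k)) (spider_deg k).
  by case/andP=> k_gt0 k_lt; rewrite !deg_spider //; have := spider_parent_lt k_gt0; lia.
rewrite (edge_sum_parent_tree spider_parent_lt) (eq_big_nat _ _ deg_edge).
rewrite (sum_nat_split_const (c := f 2%N 2%N)) => [|k k_mid];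
  first congr (_ + _ + _ + _ + _ + _ + _).
all: congr f; try rewrite /spider_parent; do ?case: eqP => ?.
all: by rewrite /spider_deg !inE; do ![case: ifP => ?]; lia.
Qed.

Lemma nedges_spider : nedges (spider n) = n.
Proof. exact: nedges_parent_tree spider_parent_lt. Qed.

Let n_neq0 : n%:R != 0 :> rat.
Proof. by rewrite pnatr_eq0; lia. Qed.

Let mulrn_sub6 (x : rat) : x *+ (n - 6) = x * (n%:R - 6).
Proof. by rewrite -natrB ?mulr_natr. Qed.

Lemma assort_mean_spider : assort_mean (spider n) = 2.
Proof.
rewrite /assort_mean nedges_spider.
rewrite (spider_edge_sum (fun a b => 2^-1 * (a%:R + b%:R))).
by rewrite mulrn_sub6; field; exact: n_neq0.
Qed.

Lemma assort_num_spider : assort_num (spider n) = 0.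
Proof.
rewrite /assort_num assort_mean_spider nedges_spider.
rewrite (spider_edge_sum (fun a b => a%:R * b%:R)).
by rewrite mulrn_sub6; field; exact: n_neq0.
Qed.

Lemma assort_den_spider : assort_den (spider n) = 3 / n%:R.
Proof.
rewrite /assort_den assort_mean_spider nedges_spider.
rewrite (spider_edge_sum (fun a b => 2^-1 * (a%:R ^+ 2 + b%:R ^+ 2))).
by rewrite mulrn_sub6; field; exact: n_neq0.
Qed.

End Spider.

Theorem theorem2 (n : nat) : (7 <= n)%N ->
  exists e : rel 'I_n, is_tree e /\ neutral e.
Proof.
case: n => // n n_gt6; exists (spider n); split; first exact: spider_is_tree.
split; first by rewrite nedges_spider; lia.
  by rewrite assort_den_spider // mulf_neq0 // invr_eq0 pnatr_eq0; lia.
by rewrite /assortativity assort_num_spider // mul0r.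
Qed.
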